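(* For any nonempty computably enumerable set $B\subseteq\omega$ the following are equivalent: (1) $B$ is disjoint from some infinite computable set; (2) there is a computable permutation $\pi$ of $\omega$ and a self-constructing set $A$ such that $A$ and $B$ are images of one another under $\pi$ (i.e. $\pi(A)=B$, equivalently $A=\pi^{-1}(B)$).
   Context: $\omega$ denotes the set of natural numbers $\{0,1,2,\dots\}$. $\langle \psi_e : e\in\omega\rangle$ is a standard (acceptable, in the sense of Rogers) computable numbering of all partial computable functions from $\omega$ to $\omega$, and $W_e$ denotes the domain of $\psi_e$, so $\langle W_e:e\in\omega\rangle$ is a uniform listing of all computably enumerable subsets of $\omega$. A nonempty computably enumerable set $A\subseteq\omega$ is called self-constructing if $W_e=A$ for every $e\in A$. *)

(* A concrete model of computation: mu-recursive function codes,
   a big-step evaluation relation, an injective Goedel encoding of codes into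
   nat, and from it the acceptable numbering psi_e of unary partial computable
   functions (indices that encode no code denote the empty function). *)
From Stdlib Require Import Arith List.
Import ListNotations.

Inductive code : Type :=
| CZero : code
| CSucc : code
| CProj : nat -> code
| CComp : code -> list code -> code
| CPrec : code -> code -> code      (* primitive recursion on the first argument *)
| CMu   : code -> code.             (* minimisation on the first argument *)

Inductive eval : code -> list nat -> nat -> Prop :=
| ev_zero : forall v, eval CZero v 0
| ev_succ : forall x v, eval CSucc (x :: v) (S x)
| ev_proj : forall i v, i < length v -> eval (CProj i) v (nth i v 0)
| ev_comp : forall f gs v ws y,
    Forall2 (fun g w => eval g v w) gs ws -> eval f ws y -> eval (CComp f gs) v y
| ev_prec0 : forall f g v y, eval f v y -> eval (CPrec f g) (0 :: v) y
| ev_precS : forall f g n v r y,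
    eval (CPrec f g) (n :: v) r -> eval g (n :: r :: v) y ->
    eval (CPrec f g) (S n :: v) y
| ev_mu : forall f v n,
    eval f (n :: v) 0 ->
    (forall m, m < n -> exists k, eval f (m :: v) (S k)) ->
    eval (CMu f) v n.

(* Bijective pairing nat*nat -> nat : <a,b> = 2^a (2b+1) - 1. *)
Definition pair (a b : nat) : nat := 2 ^ a * (2 * b + 1) - 1.

Fixpoint encode (c : code) : nat :=
  match c with
  | CZero => pair 0 0
  | CSucc => pair 1 0
  | CProj i => pair 2 i
  | CComp f gs =>
      pair 3 (pair (encode f)
        ((fix encl (l : list code) : nat :=
            match l with
            | [] => 0
            | g :: l' => S (pair (encode g) (encl l'))
            end) gs))
  | CPrec f g => pair 4 (pair (encode f) (encode g))
  | CMu f => pair 5 (encode f)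
  end.

(* psi e x = y : the e-th unary partial computable function converges on x with value y. *)
Definition psi (e x y : nat) : Prop := exists c, encode c = e /\ eval c [x] y.

Definition W (e x : nat) : Prop := exists y, psi e x y.

Definition ce_set (A : nat -> Prop) : Prop := exists e, forall x, A x <-> W e x.

Definition computable_fun (f : nat -> nat) : Prop :=
  exists e, forall x, psi e x (f x).

Definition computable_set (R : nat -> Prop) : Prop :=
  exists chi : nat -> nat, computable_fun chi /\
    forall x, (R x <-> chi x = 1) /\ (~ R x <-> chi x = 0).

Definition infinite_set (R : nat -> Prop) : Prop :=
  forall n, exists m, n <= m /\ R m.

Definition bijective (f : nat -> nat) : Prop :=
  (forall x y, f x = f y -> x = y) /\ (forall y, exists x, f x = y).

Definition computable_perm (pi : nat -> nat) : Prop :=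
  bijective pi /\ computable_fun pi.

Definition self_constructing (A : nat -> Prop) : Prop :=
  ce_set A /\ (exists x, A x) /\ (forall e, A e -> forall x, W e x <-> A x).

(* The fixed point is chosen
   with W_n0 = pi^{-1}(B) =: A.  Then pi(A) = B avoids R, so every e in A is
   mapped into Q, hence is a padding of n0 and W_e = W_n0 = A. *)

From Stdlib Require Import Arith List Lia Classical IndefiniteDescription FinFun.
Import ListNotations.

Definition eval_nested_ind (P : code -> list nat -> nat -> Prop)
  (Hz : forall v, P CZero v 0)
  (Hs : forall x v, P CSucc (x :: v) (S x))
  (Hp : forall i v, i < length v -> P (CProj i) v (nth i v 0))
  (Hc : forall f gs v ws y,
    Forall2 (fun g w => eval g v w /\ P g v w) gs ws ->
    eval f ws y -> P f ws y -> P (CComp f gs) v y)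
  (Hp0 : forall f g v y, eval f v y -> P f v y -> P (CPrec f g) (0 :: v) y)
  (HpS : forall f g n v r y,
    eval (CPrec f g) (n :: v) r -> P (CPrec f g) (n :: v) r ->
    eval g (n :: r :: v) y -> P g (n :: r :: v) y -> P (CPrec f g) (S n :: v) y)
  (Hm : forall f v n, eval f (n :: v) 0 -> P f (n :: v) 0 ->
    (forall m, m < n -> exists k, eval f (m :: v) (S k) /\ P f (m :: v) (S k)) ->
    P (CMu f) v n) :
  forall c v y, eval c v y -> P c v y :=
  fix F c v y (H : eval c v y) {struct H} : P c v y :=
  match H in eval c v y return P c v y with
  | ev_zero v => Hz v
  | ev_succ x v => Hs x v
  | ev_proj i v h => Hp i v h
  | ev_comp f gs v ws y HF Hf =>
      Hc f gs v ws y
        ((fix G gs ws (HF : Forall2 (fun g w => eval g v w) gs ws) {struct HF}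
            : Forall2 (fun g w => eval g v w /\ P g v w) gs ws :=
          match HF in Forall2 _ gs ws
                return Forall2 (fun g w => eval g v w /\ P g v w) gs ws with
          | @Forall2_nil _ _ _ => @Forall2_nil _ _ _
          | @Forall2_cons _ _ _ g w gs' ws' h t =>
              @Forall2_cons _ _ _ g w gs' ws' (conj h (F g v w h)) (G gs' ws' t)
          end) gs ws HF) Hf (F f ws y Hf)
  | ev_prec0 f g v y h => Hp0 f g v y h (F _ _ _ h)
  | ev_precS f g n v r y h1 h2 => HpS f g n v r y h1 (F _ _ _ h1) h2 (F _ _ _ h2)
  | ev_mu f v n h0 hlt => Hm f v n h0 (F _ _ _ h0)
      (fun m hm => match hlt m hm with
                   | ex_intro _ k hk => ex_intro _ k (conj hk (F _ _ _ hk)) end)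
  end.

Lemma eval_det : forall c v y, eval c v y -> forall y', eval c v y' -> y = y'.
Proof.
  apply (eval_nested_ind (fun c v y => forall y', eval c v y' -> y = y')).
  - intros v y' H; inversion H; auto.
  - intros x v y' H; inversion H; auto.
  - intros i v _ y' H; inversion H; auto.
  - intros f gs v ws y HF _ IHf y' H; inversion H as [| | |f0 gs0 v0 ws' y0 HF' Hf'| | |]; subst.
    enough (ws = ws') by (subst; auto).
    clear -HF HF'; revert ws' HF'.
    induction HF as [|g w gs ws [_ IHg] _ IH]; intros ws' HF'; inversion HF'; subst;
      f_equal; auto.
  - intros f g v y _ IH y' H; inversion H; subst; auto.
  - intros f g n v r y _ IH1 _ IH2 y' H; inversion H; subst.
    match goal with Hr : eval (CPrec f g) _ _ |- _ => apply IH1 in Hr end; subst; auto.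
  - intros f v n _ IH0 Hlt y' H; inversion H as [| | | | | |f0 v0 n0 H0 Hlt']; subst.
    destruct (lt_eq_lt_dec n y') as [[Hl|He]|Hl]; auto.
    + destruct (Hlt' n Hl) as [k Hk]. apply IH0 in Hk. discriminate.
    + destruct (Hlt y' Hl) as [k [_ IH]]. apply IH in H0. discriminate.
Qed.

Lemma eval_comp_iff : forall f gs v ws y, Forall2 (fun g w => eval g v w) gs ws ->
  (eval (CComp f gs) v y <-> eval f ws y).
Proof.
  intros f gs v ws y HF. split.
  - intros H; inversion H as [| | |f0 gs0 v0 ws' y0 HF' Hf'| | |]; subst.
    enough (ws = ws') by (subst; auto).
    clear -HF HF'; revert ws' HF'.
    induction HF; intros ws' HF'; inversion HF'; subst; f_equal; eauto using eval_det.
  - intros H. econstructor; eauto.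
Qed.

Lemma pair_S : forall a b, S (pair a b) = 2 ^ a * (2 * b + 1).
Proof.
  intros a b. unfold pair. assert (1 <= 2 ^ a) by (induction a; simpl; lia). nia.
Qed.

Lemma pow2_odd_inj : forall a a' b b',
  2 ^ a * (2 * b + 1) = 2 ^ a' * (2 * b' + 1) -> a = a' /\ b = b'.
Proof.
  induction a; intros a' b b' H; destruct a'; simpl in H; rewrite ?Nat.add_0_r in H.
  - lia.
  - lia.
  - lia.
  - destruct (IHa a' b b'); lia.
Qed.

Lemma pair_inj : forall a b a' b', pair a b = pair a' b' -> a = a' /\ b = b'.
Proof. intros. apply pow2_odd_inj. rewrite <- !pair_S. lia. Qed.

Lemma pair_ge : forall a b, b <= pair a b /\ a <= pair a b.
Proof.
  intros a b. assert (H := pair_S a b).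
  assert (a < 2 ^ a) by (apply Nat.pow_gt_lin_r; lia). split; nia.
Qed.

Definition code_nested_ind (P : code -> Prop)
  (Hz : P CZero) (Hs : P CSucc) (Hp : forall i, P (CProj i))
  (Hc : forall f gs, P f -> Forall P gs -> P (CComp f gs))
  (Hr : forall f g, P f -> P g -> P (CPrec f g))
  (Hm : forall f, P f -> P (CMu f)) : forall c, P c :=
  fix F c : P c :=
  match c with
  | CZero => Hz | CSucc => Hs | CProj i => Hp i
  | CComp f gs => Hc f gs (F f)
      ((fix G l : Forall P l :=
          match l with
          | [] => Forall_nil _
          | g :: l' => @Forall_cons _ _ g l' (F g) (G l')
          end) gs)
  | CPrec f g => Hr f g (F f) (F g)
  | CMu f => Hm f (F f)
  end.

Fixpoint encode_list (l : list code) : nat :=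
  match l with [] => 0 | g :: l' => S (pair (encode g) (encode_list l')) end.

Lemma encode_comp : forall f gs,
  encode (CComp f gs) = pair 3 (pair (encode f) (encode_list gs)).
Proof. reflexivity. Qed.

Lemma encode_inj : forall c c', encode c = encode c' -> c = c'.
Proof.
  apply (code_nested_ind (fun c => forall c', encode c = encode c' -> c = c'));
  [ | | intros i | intros f gs IHf IHgs | intros f g IHf IHg | intros f IHf ];
  intros c' H; destruct c' as [ | | j | f' gs' | f' g' | f'];
  rewrite ?encode_comp in H; simpl in H;
  apply pair_inj in H; destruct H as [H1 H2]; try discriminate; auto.
  - apply pair_inj in H2. destruct H2 as [H2 H3]. apply IHf in H2. subst. f_equal.
    revert gs' H3. induction IHgs; intros gs' H3; destruct gs'; simpl in H3;
      try discriminate; auto.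
    injection H3 as H3. apply pair_inj in H3. destruct H3. f_equal; auto.
  - apply pair_inj in H2. destruct H2. f_equal; auto.
  - f_equal; auto.
Qed.

Lemma W_code : forall c x, W (encode c) x <-> exists y, eval c [x] y.
Proof.
  intros c x; split.
  - intros [y [c' [E H]]]. apply encode_inj in E; subst. eauto.
  - intros [y H]. exists y, c; auto.
Qed.

Lemma code_of_fun : forall f, computable_fun f -> exists c, forall x, eval c [x] (f x).
Proof.
  intros f [e He]. destruct (He 0) as [c0 [E0 _]]. exists c0. intros x.
  destruct (He x) as [c [E H]]. rewrite <- E0 in E. apply encode_inj in E. subst; auto.
Qed.

Lemma computable_of_code : forall c f, (forall x, eval c [x] (f x)) -> computable_fun f.
Proof. intros c f Hc. exists (encode c). intros x. exists c; auto. Qed.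

Lemma code_of_ce : forall B, ce_set B -> (exists x, B x) ->
  exists c, forall x, B x <-> exists y, eval c [x] y.
Proof.
  intros B [e He] [x0 Hx0]. apply He in Hx0. destruct Hx0 as [y0 [c0 [E0 _]]]. subst e.
  exists c0. intros x. rewrite He. apply W_code.
Qed.

(* Indices 64m+63 are no Goedel numbers (the first pairing component of a
   Goedel number is at most 5), so their domain is empty. *)
Lemma encode_not_63 : forall c m, encode c <> 64 * m + 63.
Proof.
  assert (Hpair : forall t b m, t <= 5 -> pair t b <> 64 * m + 63).
  { intros t b m Ht H. assert (S (pair t b) = 64 * S m) by lia. rewrite pair_S in H0.
    destruct t as [|[|[|[|[|[|]]]]]]; simpl in H0; lia. }
  intros c m; destruct c; simpl; apply Hpair; lia.
Qed.

Lemma W_63_empty : forall m x, ~ W (64 * m + 63) x.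
Proof. intros m x [y [c [E _]]]. eapply encode_not_63; eauto. Qed.

(* Codes for concrete functions.  [ev] proves goals [eval c v y] for codes built
   from the basic ones and from the codes registered in the hint base [evdb],
   leaving the arithmetic identity between the computed and the claimed value. *)
Lemma ev_eq : forall c v y y', eval c v y' -> y' = y -> eval c v y.
Proof. intros; subst; auto. Qed.

Create HintDb evdb.

Ltac ev_free :=
  lazymatch goal with
  | |- eval (CComp _ _) _ _ => eapply ev_comp; [ ev_list | ev_free ]
  | |- eval (CProj _) _ _ => apply ev_proj; simpl; lia
  | |- eval CSucc _ _ => apply ev_succ
  | |- eval CZero _ _ => apply ev_zero
  | |- eval _ _ _ => solve [eauto with evdb]
  end
with ev_list :=
  lazymatch goal with
  | |- Forall2 _ [] _ => apply Forall2_nil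
  | |- Forall2 _ (_ :: _) _ => apply Forall2_cons; [ ev_free | ev_list ]
  end.

Ltac ev := eapply ev_eq; [ ev_free | cbn [nth] ].

Lemma prec0 : forall f g f0 gs h, eval f [] f0 -> (forall n r, eval g [n; r] (gs n r)) ->
  h 0 = f0 -> (forall n, h (S n) = gs n (h n)) -> forall x, eval (CPrec f g) [x] (h x).
Proof.
  intros f g f0 gs h Hf Hg H0 HS x. induction x.
  - rewrite H0. constructor; auto.
  - rewrite HS. eapply ev_precS; eauto.
Qed.

Lemma prec1 : forall f g f0 gs h, (forall x, eval f [x] (f0 x)) ->
  (forall n r x, eval g [n; r; x] (gs n r x)) ->
  (forall x, h 0 x = f0 x) -> (forall n x, h (S n) x = gs n (h n x) x) ->
  forall n x, eval (CPrec f g) [n; x] (h n x).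
Proof.
  intros f g f0 gs h Hf Hg H0 HS n x. induction n.
  - rewrite H0. constructor; auto.
  - rewrite HS. eapply ev_precS; eauto.
Qed.

Lemma prec2 : forall f g f0 gs h, (forall x y, eval f [x; y] (f0 x y)) ->
  (forall n r x y, eval g [n; r; x; y] (gs n r x y)) ->
  (forall x y, h 0 x y = f0 x y) -> (forall n x y, h (S n) x y = gs n (h n x y) x y) ->
  forall n x y, eval (CPrec f g) [n; x; y] (h n x y).
Proof.
  intros f g f0 gs h Hf Hg H0 HS n x y. induction n.
  - rewrite H0. constructor; auto.
  - rewrite HS. eapply ev_precS; eauto.
Qed.

Fixpoint kc (k : nat) : code := match k with 0 => CZero | S k => CComp CSucc [kc k] end.
Lemma kc_ok : forall k v, eval (kc k) v k.
Proof. induction k; intros v; simpl. constructor. ev. reflexivity. Qed.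
#[export] Hint Resolve kc_ok : evdb.

Definition cAdd := CPrec (CProj 0) (CComp CSucc [CProj 1]).
Lemma cAdd_ok : forall x y, eval cAdd [x; y] (x + y).
Proof. apply prec1 with (f0 := fun x => x) (gs := fun n r x => S r); intros; try ev; auto. Qed.
#[export] Hint Resolve cAdd_ok : evdb.

Definition cPred := CPrec CZero (CProj 0).
Lemma cPred_ok : forall x, eval cPred [x] (pred x).
Proof. apply prec0 with (f0 := 0) (gs := fun n r => n); intros; try ev; auto. Qed.
#[export] Hint Resolve cPred_ok : evdb.

Definition cSubR := CPrec (CProj 0) (CComp cPred [CProj 1]).
Lemma cSubR_ok : forall y x, eval cSubR [y; x] (x - y).
Proof.
  apply prec1 with (f0 := fun x => x) (gs := fun n r x => pred r); intros; try ev; auto; lia.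
Qed.
#[export] Hint Resolve cSubR_ok : evdb.

Definition cSub := CComp cSubR [CProj 1; CProj 0].
Lemma cSub_ok : forall x y, eval cSub [x; y] (x - y).
Proof. intros. unfold cSub. ev. reflexivity. Qed.
#[export] Hint Resolve cSub_ok : evdb.

Definition cMul := CPrec CZero (CComp cAdd [CProj 1; CProj 2]).
Lemma cMul_ok : forall x y, eval cMul [x; y] (x * y).
Proof.
  apply prec1 with (f0 := fun x => 0) (gs := fun n r x => r + x); intros; try ev; auto; lia.
Qed.
#[export] Hint Resolve cMul_ok : evdb.

Definition cPow2 := CPrec (kc 1) (CComp cAdd [CProj 1; CProj 1]).
Lemma cPow2_ok : forall x, eval cPow2 [x] (2 ^ x).
Proof.
  apply prec0 with (f0 := 1) (gs := fun n r => r + r); intros; try ev; simpl; auto; lia.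
Qed.
#[export] Hint Resolve cPow2_ok : evdb.

Definition cPair :=
  CComp cSub [CComp cMul [CComp cPow2 [CProj 0]; CComp CSucc [CComp cAdd [CProj 1; CProj 1]]];
              kc 1].
Lemma cPair_ok : forall a b, eval cPair [a; b] (pair a b).
Proof. intros. unfold cPair. ev. unfold pair. f_equal. f_equal. lia. Qed.
#[export] Hint Resolve cPair_ok : evdb.

Definition beq (x y : nat) : nat := if Nat.eqb x y then 1 else 0.
Definition cEq :=
  CComp cSub [kc 1; CComp cAdd [CComp cSub [CProj 0; CProj 1]; CComp cSub [CProj 1; CProj 0]]].
Lemma cEq_ok : forall x y, eval cEq [x; y] (beq x y).
Proof. intros. unfold cEq. ev. unfold beq. destruct (Nat.eqb_spec x y); lia. Qed.
#[export] Hint Resolve cEq_ok : evdb.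

Definition cIf :=
  CComp cAdd [CComp cMul [CProj 0; CProj 1]; CComp cMul [CComp cSub [kc 1; CProj 0]; CProj 2]].
Lemma cIf_ok : forall b u w, eval cIf [b; u; w] (b * u + (1 - b) * w).
Proof. intros. unfold cIf. ev. reflexivity. Qed.
#[export] Hint Resolve cIf_ok : evdb.

Lemma least_witness : forall P : nat -> Prop, (forall n, P n \/ ~ P n) -> (exists n, P n) ->
  exists n, P n /\ forall m, m < n -> ~ P m.
Proof.
  intros P Hd Hex.
  destruct (Wf_nat.dec_inh_nat_subset_has_unique_least_element P Hd Hex)
    as [n [[Pn Hmin] _]].
  exists n. split; auto. intros m Hm Pm. specialize (Hmin m Pm). lia.
Qed.

Lemma mu_total : forall F f, (forall y k, eval F [y; k] (f y k)) ->
  (forall k, exists n, f n k = 0) ->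
  exists g, (forall k, eval (CMu F) [k] (g k)) /\ (forall k, f (g k) k = 0).
Proof.
  intros F f HF Hex.
  assert (Hleast : forall k, exists n, f n k = 0 /\ forall m, m < n -> f m k <> 0).
  { intros k. apply least_witness; auto. intros n; destruct (Nat.eq_dec (f n k) 0); auto. }
  apply functional_choice in Hleast. destruct Hleast as [g Hg]. exists g. split.
  - intros k. destruct (Hg k) as [H0 Hlt]. constructor.
    + rewrite <- H0. auto.
    + intros m Hm. specialize (Hlt m Hm). destruct (f m k) as [|p] eqn:E; [congruence|].
      exists p. rewrite <- E. auto.
  - intros k. apply Hg.
Qed.

(* Counting.  A 0/1-valued f represents the set of its ones; [cnt f y] counts
   the ones below y, i.e. is the rank of y among them. *)
Definition indicator (f : nat -> nat) : Prop := forall y, f y <= 1.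
Definition unbounded (f : nat -> nat) : Prop := forall N, exists y, N <= y /\ f y = 1.
Definition compl (f : nat -> nat) (y : nat) : nat := 1 - f y.

Fixpoint cnt (f : nat -> nat) (y : nat) : nat :=
  match y with 0 => 0 | S y => cnt f y + f y end.

Definition cCnt cf := CPrec CZero (CComp cAdd [CProj 1; CComp cf [CProj 0]]).
Lemma cCnt_ok : forall cf f, (forall x, eval cf [x] (f x)) ->
  forall y, eval (cCnt cf) [y] (cnt f y).
Proof.
  intros cf f Hf.
  apply prec0 with (f0 := 0) (gs := fun n r => r + f n); intros; try constructor; try ev; auto.
Qed.

Definition cCnt2 cf2 := CPrec CZero (CComp cAdd [CProj 1; CComp cf2 [CProj 2; CProj 0]]).
Lemma cCnt2_ok : forall cf2 f, (forall n z, eval cf2 [n; z] (f n z)) ->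
  forall x n, eval (cCnt2 cf2) [x; n] (cnt (f n) x).
Proof.
  intros cf2 f Hf.
  apply prec1 with (f0 := fun _ => 0) (gs := fun z r n => r + f n z);
    intros; try constructor; try ev; auto.
Qed.

Lemma cnt_le : forall f, indicator f -> forall y, cnt f y <= y.
Proof. intros f Hb y; induction y; simpl; auto. specialize (Hb y); lia. Qed.

Lemma cnt_mono : forall f y y', y <= y' -> cnt f y <= cnt f y'.
Proof. intros f y y' H; induction H; simpl; lia. Qed.

Lemma cnt_inj : forall f y y', f y = 1 -> f y' = 1 -> cnt f y = cnt f y' -> y = y'.
Proof.
  assert (Hlt : forall f y y', f y = 1 -> y < y' -> cnt f y < cnt f y').
  { intros f y y' H1 H2. assert (cnt f (S y) <= cnt f y') by (apply cnt_mono; lia).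
    simpl in H. lia. }
  intros f y y' H1 H2 H3. destruct (lt_eq_lt_dec y y') as [[H|H]|H]; auto.
  - apply (Hlt f) in H; auto; lia.
  - apply (Hlt f) in H; auto; lia.
Qed.

Lemma exists_rank : forall f, indicator f -> unbounded f ->
  forall k, exists y, f y = 1 /\ cnt f y = k.
Proof.
  intros f Hb Hi k.
  assert (Hbig : exists z, S k <= cnt f z).
  { clear Hb. induction k as [|k [y Hy]].
    - destruct (Hi 0) as [z [_ Hz]]. exists (S z). simpl. lia.
    - destruct (Hi y) as [z [Hz1 Hz2]]. exists (S z). simpl.
      assert (cnt f y <= cnt f z) by (apply cnt_mono; auto). lia. }
  destruct (least_witness (fun z => S k <= cnt f z)) as [w [Hw Hmin]]; auto.
  { intros n. destruct (le_lt_dec (S k) (cnt f n)); [left|right]; lia. }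
  destruct w as [|w]; [simpl in Hw; lia|].
  assert (~ S k <= cnt f w) by (apply Hmin; lia). simpl in Hw. specialize (Hb w).
  exists w. lia.
Qed.

Lemma compl_indicator : forall f, indicator (compl f).
Proof. intros f y. unfold compl. lia. Qed.

Lemma cnt_compl : forall f, indicator f -> forall x, cnt (compl f) x = x - cnt f x.
Proof.
  intros f Hb x. induction x; [reflexivity|]. cbn [cnt]. rewrite IHx.
  unfold compl. pose proof (Hb x). pose proof (cnt_le f Hb x). lia.
Qed.

Definition rank_enum (f g : nat -> nat) : Prop := forall k, f (g k) = 1 /\ cnt f (g k) = k.

Definition cEnumTest cf :=
  CComp cSub [kc 1; CComp cMul [CComp cf [CProj 0];
                                CComp cEq [CComp (cCnt cf) [CProj 0]; CProj 1]]].
Definition cEnum cf := CMu (cEnumTest cf).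

Lemma cEnum_ok : forall cf f, (forall x, eval cf [x] (f x)) -> indicator f -> unbounded f ->
  exists g, (forall k, eval (cEnum cf) [k] (g k)) /\ rank_enum f g.
Proof.
  intros cf f Hf Hb Hi. pose proof (cCnt_ok cf f Hf).
  destruct (mu_total (cEnumTest cf) (fun y k => 1 - f y * beq (cnt f y) k)) as [g [Hg1 Hg2]].
  - intros y k. unfold cEnumTest. ev. reflexivity.
  - intros k. destruct (exists_rank f Hb Hi k) as [y [H1 H2]]. exists y. rewrite H1.
    unfold beq. rewrite H2, Nat.eqb_refl. reflexivity.
  - exists g. split; auto. intros k. specialize (Hg2 k). specialize (Hb (g k)).
    unfold beq in Hg2. destruct (Nat.eqb_spec (cnt f (g k)) k); lia.
Qed.

(* Merging enumerations: the k-th one of p goes to g1 k, the k-th zero of p to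
   g0 k.  When g1, g0 enumerate the ones and the zeros of q, this is a
   bijection carrying (the set represented by) p onto q. *)
Definition merge (p g1 g0 : nat -> nat) (x : nat) : nat :=
  p x * g1 (cnt p x) + (1 - p x) * g0 (x - cnt p x).

Section Merge.
Variables p q g1 g0 : nat -> nat.
Hypotheses (p01 : indicator p) (q01 : indicator q).
Hypotheses (p_ones : unbounded p) (p_zeros : unbounded (compl p)).
Hypotheses (g1_enum : rank_enum q g1) (g0_enum : rank_enum (compl q) g0).

Lemma merge_one : forall x, p x = 1 -> merge p g1 g0 x = g1 (cnt p x).
Proof. intros x H. unfold merge. rewrite H. lia. Qed.

Lemma merge_zero : forall x, p x = 0 -> merge p g1 g0 x = g0 (cnt (compl p) x).
Proof. intros x H. unfold merge. rewrite cnt_compl, H by auto. lia. Qed.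

Lemma p_cases : forall x, p x = 0 \/ p x = 1.
Proof. intros x. specialize (p01 x). lia. Qed.

Lemma merge_preserves : forall x, q (merge p g1 g0 x) = p x.
Proof.
  intros x. destruct (p_cases x) as [H|H].
  - rewrite merge_zero by auto. set (k := cnt (compl p) x).
    destruct (g0_enum k) as [Hq _]. unfold compl in Hq. specialize (q01 (g0 k)). lia.
  - rewrite merge_one by auto. rewrite H. apply g1_enum.
Qed.

Lemma merge_inj : forall x y, merge p g1 g0 x = merge p g1 g0 y -> x = y.
Proof.
  intros x y Hxy.
  assert (Hp : p x = p y) by (rewrite <- !merge_preserves, Hxy; reflexivity).
  destruct (p_cases x) as [Hx|Hx].
  - rewrite !merge_zero in Hxy by lia.
    apply (cnt_inj (compl p)); [unfold compl; lia | unfold compl; lia |].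
    rewrite <- (proj2 (g0_enum (cnt (compl p) x))), Hxy. apply g0_enum.
  - rewrite !merge_one in Hxy by lia.
    apply (cnt_inj p); try lia.
    rewrite <- (proj2 (g1_enum (cnt p x))), Hxy. apply g1_enum.
Qed.

Lemma merge_surj : forall y, exists x, merge p g1 g0 x = y.
Proof.
  intros y. assert (Hq : q y = 0 \/ q y = 1) by (specialize (q01 y); lia).
  destruct Hq as [Hq|Hq].
  - destruct (exists_rank (compl p) (compl_indicator p) p_zeros (cnt (compl q) y))
      as [x [H1 H2]].
    exists x. rewrite merge_zero by (unfold compl in H1; lia). rewrite H2.
    apply (cnt_inj (compl q)); [apply g0_enum | unfold compl; lia | apply g0_enum].
  - destruct (exists_rank p p01 p_ones (cnt q y)) as [x [H1 H2]].
    exists x. rewrite merge_one, H2 by auto.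
    apply (cnt_inj q); [apply g1_enum | lia | apply g1_enum].
Qed.

End Merge.

Definition cCompl cf := CComp cSub [kc 1; cf].
Lemma cCompl_ok : forall cf f, (forall x, eval cf [x] (f x)) ->
  forall x, eval (cCompl cf) [x] (compl f x).
Proof. intros cf f Hf x. unfold cCompl. ev. reflexivity. Qed.

(* Splitting an infinite set: the ones of f of even rank.  Both they and their
   complement (which contains the ones of odd rank) are infinite. *)
Fixpoint par (w : nat) : nat := match w with 0 => 0 | S w => 1 - par w end.
Definition cPar := CPrec CZero (CComp cSub [kc 1; CProj 1]).
Lemma cPar_ok : forall w, eval cPar [w] (par w).
Proof.
  apply prec0 with (f0 := 0) (gs := fun n r => 1 - r); intros; try constructor; try ev; auto.
Qed.
#[export] Hint Resolve cPar_ok : evdb.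

Lemma par_double : forall n, par (2 * n) = 0 /\ par (S (2 * n)) = 1.
Proof.
  induction n as [|n [H0 H1]]; [simpl; auto|].
  replace (2 * S n) with (S (S (2 * n))) by lia. cbn [par]. rewrite H0. simpl. auto.
Qed.

Definition even_part (f : nat -> nat) (y : nat) : nat := f y * (1 - par (cnt f y)).
Definition cEvenPart cf := CComp cMul [cf; CComp cSub [kc 1; CComp cPar [CComp (cCnt cf) [CProj 0]]]].
Lemma cEvenPart_ok : forall cf f, (forall x, eval cf [x] (f x)) ->
  forall x, eval (cEvenPart cf) [x] (even_part f x).
Proof. intros cf f Hf x. pose proof (cCnt_ok cf f Hf). unfold cEvenPart. ev. reflexivity. Qed.

Section EvenPart.
Variable f : nat -> nat.
Hypotheses (f01 : indicator f) (f_ones : unbounded f).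

Lemma even_part_indicator : indicator (even_part f).
Proof. intros y. unfold even_part. specialize (f01 y). nia. Qed.

Lemma even_part_sub : forall y, even_part f y = 1 -> f y = 1.
Proof. intros y. unfold even_part. specialize (f01 y). nia. Qed.

(* The one of rank 2N (resp. 2N+1) lies at or above N. *)
Lemma even_part_unbounded : unbounded (even_part f).
Proof.
  intros N. destruct (exists_rank f f01 f_ones (2 * N)) as [y [H1 H2]]. exists y. split.
  - pose proof (cnt_le f f01 y). lia.
  - unfold even_part. rewrite H1, H2, (proj1 (par_double N)). reflexivity.
Qed.

Lemma even_part_co_unbounded : unbounded (compl (even_part f)).
Proof.
  intros N. destruct (exists_rank f f01 f_ones (S (2 * N))) as [y [H1 H2]]. exists y. split.
  - pose proof (cnt_le f f01 y). lia.
  - unfold compl, even_part. rewrite H1, H2, (proj2 (par_double N)). reflexivity.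
Qed.

End EvenPart.

(* Padding.  padj j n is the index of the j-fold composition of (the code with
   index) n with the identity; for n = encode c all these indices have the
   domain of c. *)
Fixpoint padj (j n : nat) : nat := match j with 0 => n | S j => pair 3 (pair (padj j n) 8) end.
Fixpoint padn (j : nat) (c : code) : code :=
  match j with 0 => c | S j => CComp (padn j c) [CProj 0] end.

Lemma encode_padn : forall j c, encode (padn j c) = padj j (encode c).
Proof. induction j; intros c; simpl; auto. Qed.

Lemma eval_padn : forall j c x y, eval (padn j c) [x] y <-> eval c [x] y.
Proof.
  induction j; intros c x y; simpl; [tauto|].
  rewrite (eval_comp_iff _ _ _ [x]); [apply IHj | repeat constructor].
Qed.

Lemma W_padj : forall j c x, W (padj j (encode c)) x <-> W (encode c) x.
Proof.
  intros j c x. rewrite <- encode_padn, !W_code.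
  split; intros [y Hy]; exists y; apply eval_padn in Hy || apply eval_padn; auto.
Qed.

(* The paddings of n increase by at least 2 at each step; in particular they
   are pairwise distinct and leave gaps. *)
Lemma padj_step : forall j n, padj j n + 2 <= padj (S j) n.
Proof.
  intros j n. simpl. assert (H := pair_S 3 (pair (padj j n) 8)).
  assert (H2 := pair_ge (padj j n) 8). simpl in H. lia.
Qed.

Lemma padj_lt : forall i j n, i < j -> padj i n + 2 <= padj j n.
Proof.
  intros i j n H. induction H; [apply padj_step|]. pose proof (padj_step m n). lia.
Qed.

Lemma padj_ge : forall j n, j <= padj j n.
Proof.
  induction j; intros n; [simpl; lia|]. pose proof (padj_step j n). specialize (IHj n). lia.
Qed.

(* Membership in the padding set of n is decidable uniformly in n: x is a
   padding of n iff it is padj j n for some j <= x, and [pad_count b n x]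
   counts the j < b with padj j n = x. *)
Definition cPadj := CPrec (CProj 0) (CComp cPair [kc 3; CComp cPair [CProj 1; kc 8]]).
Lemma cPadj_ok : forall j n, eval cPadj [j; n] (padj j n).
Proof.
  apply prec1 with (f0 := fun n => n) (gs := fun j r n => pair 3 (pair r 8)); intros; try ev; auto.
Qed.
#[export] Hint Resolve cPadj_ok : evdb.

Fixpoint pad_count (b n x : nat) : nat :=
  match b with 0 => 0 | S j => pad_count j n x + beq (padj j n) x end.
Definition cPadCount :=
  CPrec CZero (CComp cAdd [CProj 1; CComp cEq [CComp cPadj [CProj 0; CProj 2]; CProj 3]]).
Lemma cPadCount_ok : forall b n x, eval cPadCount [b; n; x] (pad_count b n x).
Proof.
  apply prec2 with (f0 := fun _ _ => 0) (gs := fun j r n x => r + beq (padj j n) x);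
    intros; try constructor; try ev; auto.
Qed.
#[export] Hint Resolve cPadCount_ok : evdb.

Lemma pad_count_pos : forall b n x, 1 <= pad_count b n x <-> exists j, j < b /\ padj j n = x.
Proof.
  induction b; intros n x; simpl; [split; [lia | intros [j [H _]]; lia]|].
  unfold beq. destruct (Nat.eqb_spec (padj b n) x).
  - split; [intros _; exists b; split; auto; lia | lia].
  - rewrite Nat.add_0_r, IHb. split; intros [j [H1 H2]]; exists j; split; auto; try lia.
    destruct (Nat.eq_dec j b); subst; [contradiction|lia].
Qed.

Definition pad_ind (n x : nat) : nat := 1 - (1 - pad_count (S x) n x).
Definition cPadInd :=
  CComp cSub [kc 1; CComp cSub [kc 1; CComp cPadCount [CComp CSucc [CProj 1]; CProj 0; CProj 1]]].
Lemma cPadInd_ok : forall n x, eval cPadInd [n; x] (pad_ind n x).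
Proof. intros. unfold cPadInd. ev. reflexivity. Qed.
#[export] Hint Resolve cPadInd_ok : evdb.

Lemma pad_ind_indicator : forall n, indicator (pad_ind n).
Proof. intros n x. unfold pad_ind. lia. Qed.

Lemma pad_ind_spec : forall n x, pad_ind n x = 1 <-> exists j, padj j n = x.
Proof.
  intros n x. unfold pad_ind. assert (H := pad_count_pos (S x) n x). split.
  - intros H1. destruct (proj1 H) as [j [_ Hj]]; [lia | eauto].
  - intros [j Hj]. enough (1 <= pad_count (S x) n x) by lia.
    apply H. exists j. split; auto. pose proof (padj_ge j n). lia.
Qed.

Lemma pad_ind_unbounded : forall n, unbounded (pad_ind n).
Proof. intros n N. exists (padj N n). split; [apply padj_ge | apply pad_ind_spec; eauto]. Qed.

(* The successor of a padding is never a padding. *)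
Lemma pad_ind_co_unbounded : forall n, unbounded (compl (pad_ind n)).
Proof.
  intros n N. exists (S (padj N n)). split; [pose proof (padj_ge N n); lia|].
  assert (pad_ind n (S (padj N n)) <> 1).
  { rewrite pad_ind_spec. intros [j Hj]. destruct (lt_eq_lt_dec j N) as [[H|H]|H].
    - pose proof (padj_lt j N n H). lia.
    - subst. lia.
    - pose proof (padj_lt N j n H). lia. }
  pose proof (pad_ind_indicator n (S (padj N n))). unfold compl. lia.
Qed.

(* Recursion theorem.  [cSelf] computes u |-> encode (CComp T [kc u; CProj 0]),
   so the code c := CComp T [kc (encode T); CProj 0] with T := Body o (cSelf, id)
   runs Body on its own index. *)
Fixpoint kenc (u : nat) : nat :=
  match u with 0 => pair 0 0 | S y => pair 3 (pair 1 (S (pair (kenc y) 0))) end.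
Lemma encode_kc : forall u, encode (kc u) = kenc u.
Proof. induction u; simpl; [reflexivity|]. rewrite IHu. reflexivity. Qed.

Definition cKenc :=
  CPrec (kc (pair 0 0))
        (CComp cPair [kc 3; CComp cPair [kc 1; CComp CSucc [CComp cPair [CProj 1; kc 0]]]]).
Lemma cKenc_ok : forall u, eval cKenc [u] (kenc u).
Proof.
  apply prec0 with (f0 := pair 0 0) (gs := fun n r => pair 3 (pair 1 (S (pair r 0))));
    intros; try ev; auto.
Qed.
#[export] Hint Resolve cKenc_ok : evdb.

Definition self_index (u : nat) := pair 3 (pair u (S (pair (kenc u) (S (pair (pair 2 0) 0))))).
Definition cSelf :=
  CComp cPair [kc 3; CComp cPair [CProj 0; CComp CSucc [CComp cPair [CComp cKenc [CProj 0];
                                                                   kc (S (pair (pair 2 0) 0))]]]].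
Lemma cSelf_ok : forall u, eval cSelf [u] (self_index u).
Proof. intros. unfold cSelf. ev. reflexivity. Qed.
#[export] Hint Resolve cSelf_ok : evdb.

Lemma fixed_point : forall Body : code,
  exists c, forall x y, eval c [x] y <-> eval Body [encode c; x] y.
Proof.
  intros Body. set (T := CComp Body [CComp cSelf [CProj 0]; CProj 1]).
  exists (CComp T [kc (encode T); CProj 0]). intros x y.
  assert (Hself : encode (CComp T [kc (encode T); CProj 0]) = self_index (encode T))
    by (simpl; rewrite encode_kc; reflexivity).
  rewrite Hself, (eval_comp_iff _ _ _ [encode T; x]) by ev_list.
  unfold T. rewrite (eval_comp_iff _ _ _ [self_index (encode T); x])
    by ev_list.
  tauto.
Qed.

Fixpoint m64 (z : nat) : nat :=
  match z with 0 => 0 | S z => if Nat.eqb (m64 z) 63 then 0 else S (m64 z) end.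
Definition cM64 := CPrec CZero (CComp cIf [CComp cEq [CProj 1; kc 63]; CZero; CComp CSucc [CProj 1]]).
Lemma cM64_ok : forall z, eval cM64 [z] (m64 z).
Proof.
  apply prec0 with (f0 := 0) (gs := fun n r => beq r 63 * 0 + (1 - beq r 63) * S r);
    intros; try constructor; try ev; auto.
  simpl. unfold beq. destruct (Nat.eqb (m64 n) 63); lia.
Qed.
#[export] Hint Resolve cM64_ok : evdb.

Lemma m64_spec : forall z, exists q, z = 64 * q + m64 z /\ m64 z < 64.
Proof.
  induction z as [|z [q [H1 H2]]]; simpl; [exists 0; lia|].
  destruct (Nat.eqb_spec (m64 z) 63); [exists (S q) | exists q]; lia.
Qed.

Lemma m64_63 : forall m, m64 (64 * m + 63) = 63.
Proof. intros m. destruct (m64_spec (64 * m + 63)) as [q [H1 H2]]. lia. Qed.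

Lemma W_m64_empty : forall e x, m64 e = 63 -> ~ W e x.
Proof.
  intros e x He. destruct (m64_spec e) as [q [Hq _]]. rewrite He in Hq. subst e.
  apply W_63_empty.
Qed.

(* An injection of nat takes values above any bound n on {0, ..., n}. *)
Lemma injective_unbounded : forall f : nat -> nat, (forall x y, f x = f y -> x = y) ->
  forall n, exists i, n <= f i.
Proof.
  intros f Hf n. apply NNPP. intros Hno.
  assert (Hnd : NoDup (map f (seq 0 (S n))))
    by (apply Injective_map_NoDup; [intros a b; apply Hf | apply seq_NoDup]).
  assert (Hincl : incl (map f (seq 0 (S n))) (seq 0 n)).
  { intros a Ha. apply in_map_iff in Ha. destruct Ha as [i [Hi _]]. apply in_seq.
    destruct (le_lt_dec n (f i)); [|lia]. exfalso; apply Hno. exists i; congruence. }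
  apply NoDup_incl_length in Hincl; auto. rewrite length_map, !length_seq in Hincl. lia.
Qed.

(* The inverse of a computable permutation is computable, by unbounded search
   for a preimage. *)
Lemma perm_inverse_code : forall pi, computable_perm pi ->
  exists c pinv, (forall y, eval c [y] (pinv y)) /\ (forall y, pi (pinv y) = y).
Proof.
  intros pi [[_ Hsurj] Hpc]. apply code_of_fun in Hpc. destruct Hpc as [cp Hcp].
  set (cDist := CComp cAdd [CComp cSub [CComp cp [CProj 0]; CProj 1];
                            CComp cSub [CProj 1; CComp cp [CProj 0]]]).
  destruct (mu_total cDist (fun x y => (pi x - y) + (y - pi x))) as [pinv [Hpe Hp0]].
  - intros x y. unfold cDist. ev. reflexivity.
  - intros k. destruct (Hsurj k) as [x Hx]. exists x. lia.
  - exists (CMu cDist), pinv. split; auto. intros y. specialize (Hp0 y). lia.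
Qed.

Lemma computable_set_of_indicator : forall chi, computable_fun chi -> indicator chi ->
  computable_set (fun x => chi x = 1).
Proof.
  intros chi Hc H01. exists chi. split; auto.
  intros x. specialize (H01 x). split; split; intros; lia.
Qed.

(* (2) => (1).  If pi^{-1}(B) is self-constructing, pi maps the indices 64m+63 (which have
   empty domain, hence avoid every self-constructing set) onto an infinite
   computable set disjoint from B. *)
Lemma perm_image_avoids : forall B : nat -> Prop,
  (exists pi : nat -> nat, computable_perm pi /\
     exists A : nat -> Prop, self_constructing A /\ (forall x, A x <-> B (pi x))) ->
  exists R : nat -> Prop, computable_set R /\ infinite_set R /\ (forall x, R x -> ~ B x).
Proof.
  intros B [pi [Hpi [A [[_ [_ HA]] HAB]]]].
  destruct (perm_inverse_code pi Hpi) as [cinv [pinv [Hcinv Hpp]]].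
  assert (Hinv : forall x, pinv (pi x) = x) by (intros x; apply (proj1 (proj1 Hpi)); auto).
  exists (fun y => beq (m64 (pinv y)) 63 = 1). split; [|split].
  - apply computable_set_of_indicator.
    + apply (computable_of_code (CComp cEq [CComp cM64 [cinv]; kc 63])).
      intros y. ev. reflexivity.
    + intros y. unfold beq. destruct (Nat.eqb _ _); lia.
  - intros n. destruct (injective_unbounded (fun i => pi (64 * i + 63))) with (n := n) as [i Hi].
    { intros a b H. apply (proj1 (proj1 Hpi)) in H. lia. }
    exists (pi (64 * i + 63)). split; auto. rewrite Hinv, m64_63. reflexivity.
  - intros y Hy HB. unfold beq in Hy. destruct (Nat.eqb_spec (m64 (pinv y)) 63); [|discriminate].
    rewrite <- (Hpp y), <- HAB in HB.
    apply (W_m64_empty (pinv y) (pinv y)); auto. apply (HA _ HB). exact HB.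
Qed.

(* For a computable 0/1 function q with infinitely many ones and zeros there
   are permutations pi n, computable uniformly in n, carrying the padding set
   of n onto the ones of q: merge the padding set onto q. *)
Lemma padding_perms : forall cq q, (forall x, eval cq [x] (q x)) ->
  indicator q -> unbounded q -> unbounded (compl q) ->
  exists (pi : nat -> nat -> nat) (cpi : code),
    (forall n x, eval cpi [n; x] (pi n x)) /\ (forall n, bijective (pi n)) /\
    (forall n x, q (pi n x) = pad_ind n x).
Proof.
  intros cq q Hcq q01 q_ones q_zeros.
  destruct (cEnum_ok cq q Hcq q01 q_ones) as [g1 [Hg1 g1_enum]].
  destruct (cEnum_ok (cCompl cq) (compl q) (cCompl_ok _ _ Hcq) (compl_indicator _) q_zeros)
    as [g0 [Hg0 g0_enum]].
  pose proof (cCnt2_ok cPadInd pad_ind cPadInd_ok).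
  exists (fun n => merge (pad_ind n) g1 g0).
  exists (CComp cIf [cPadInd; CComp (cEnum cq) [CComp (cCnt2 cPadInd) [CProj 1; CProj 0]];
         CComp (cEnum (cCompl cq)) [CComp cSub [CProj 1; CComp (cCnt2 cPadInd) [CProj 1; CProj 0]]]]).
  split; [|split].
  - intros n x. ev. reflexivity.
  - intros n. split.
    + exact (merge_inj _ _ _ _ (pad_ind_indicator n) q01 g1_enum g0_enum).
    + exact (merge_surj _ _ _ _ (pad_ind_indicator n) q01 (pad_ind_unbounded n)
               (pad_ind_co_unbounded n) g1_enum g0_enum).
  - intros n. exact (merge_preserves _ _ _ _ (pad_ind_indicator n) q01 g1_enum g0_enum).
Qed.

Lemma avoiding_is_perm_image : forall B : nat -> Prop, ce_set B -> (exists x, B x) ->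
  (exists R : nat -> Prop, computable_set R /\ infinite_set R /\ (forall x, R x -> ~ B x)) ->
  exists pi : nat -> nat, computable_perm pi /\
    exists A : nat -> Prop, self_constructing A /\ (forall x, A x <-> B (pi x)).
Proof.
  intros B HB [b0 Hb0] [R [[chiR [HchiC HchiR]] [Rinf Rdis]]].
  destruct (code_of_ce B HB (ex_intro _ b0 Hb0)) as [cb Hcb].
  destruct (code_of_fun chiR HchiC) as [cr Hcr].
  assert (R01 : indicator chiR).
  { intros y. destruct (classic (R y)) as [H|H];
      [apply (proj1 (HchiR y)) in H | apply (proj2 (HchiR y)) in H]; lia. }
  assert (R_ones : unbounded chiR).
  { intros N. destruct (Rinf N) as [m [H1 H2]]. exists m. split; auto. apply (HchiR m); auto. }
  (* The padding sets are sent onto the complement q of the even part of R. *)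
  destruct (padding_perms (cCompl (cEvenPart cr)) (compl (even_part chiR)))
    as [pi [cpi [Hcpi [pi_bij Hpres]]]].
  { apply cCompl_ok, cEvenPart_ok, Hcr. }
  { apply compl_indicator. }
  { apply even_part_co_unbounded; auto. }
  { intros N. destruct (even_part_unbounded chiR R01 R_ones N) as [y [Hy1 Hy2]].
    exists y. unfold compl. rewrite Hy2. auto. }
  (* A fixed point n0 accepting x iff B accepts pi n0 x. *)
  destruct (fixed_point (CComp cb [cpi])) as [c Hc]. set (n0 := encode c).
  assert (HA : forall x, B (pi n0 x) <-> W n0 x).
  { intros x. unfold n0. rewrite W_code, Hcb.
    split; intros [y Hy]; exists y; revert Hy;
      rewrite Hc, (eval_comp_iff _ _ _ [pi (encode c) x]) by ev_list; auto. }
  exists (pi n0). split.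
  { split; auto. apply (computable_of_code (CComp cpi [kc n0; CProj 0])).
    intros x. ev. reflexivity. }
  exists (fun x => B (pi n0 x)). split; [|tauto]. split; [|split].
  - exists n0. exact HA.
  - destruct (proj2 (pi_bij n0) b0) as [x Hx]. exists x. rewrite Hx. auto.
  - (* An element e of A has pi e in B, so outside R and its even part; hence
       q (pi e) = 1, e is a padding of n0 and W_e = W_n0 = A. *)
    intros e He x. assert (Hpe : pad_ind n0 e = 1).
    { rewrite <- Hpres. unfold compl.
      assert (even_part chiR (pi n0 e) <> 1).
      { intros Hev. apply (Rdis (pi n0 e)); auto. apply (HchiR (pi n0 e)).
        apply even_part_sub; auto. }
      pose proof (even_part_indicator chiR R01 (pi n0 e)). lia. }
    apply pad_ind_spec in Hpe. destruct Hpe as [j Hj]. subst e.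
    rewrite HA. unfold n0. apply W_padj.
Qed.

Theorem theorem4 :
  forall B : nat -> Prop,
    ce_set B -> (exists x, B x) ->
    ((exists R : nat -> Prop,
        computable_set R /\ infinite_set R /\ (forall x, R x -> ~ B x))
     <->
     (exists pi : nat -> nat, computable_perm pi /\
        exists A : nat -> Prop, self_constructing A /\
          (* pi(A) = B, i.e. A = pi^{-1}(B) *)
          (forall x, A x <-> B (pi x)))).
Proof.
  intros B HB Hne. split.
  - apply avoiding_is_perm_image; auto.
  - apply perm_image_avoids.
Qed.
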